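(* Assume the support set $\mathcal U\subseteq\mathbb R^n$ is nonempty, compact and convex. Then the function $f(\mathbf s,\mathbf u)$ is bounded on $\mathcal S\times\mathcal U$, and $f(\mathbf s,\mathbf u)$ is jointly convex in $\mathbf s$ and $\mathbf u$.
   Context: $n\ge1$, $T>0$, $\mathcal S=\{\mathbf s\in\mathbb R^n:\mathbf s\ge0,\sum_is_i\le T\}$; costs $\mathbf c,\mathbf d\in\mathbb R^n_+$, $C\ge0$ with $d_{i+1}-d_i\le c_{i+1}$ for $i=1,\dots,n-1$. $f(\mathbf s,\mathbf u)$ is the optimal value of the linear program $\min_{\mathbf w\in\mathbb R^{n+1},\mathbf v\in\mathbb R^n}\sum_{i=1}^n(c_iw_i+d_iv_i)+Cw_{n+1}$ s.t. $w_i-v_{i-1}=u_{i-1}+w_{i-1}-s_{i-1}$ ($i=2,\dots,n+1$), $\mathbf w\ge0,w_1=0,\mathbf v\ge0$. *)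

From HB Require Import structures.
From mathcomp Require Import all_boot all_order all_algebra.
From mathcomp Require Import all_classical all_reals all_analysis.
Set Implicit Arguments. Unset Strict Implicit. Unset Printing Implicit Defensive.
Import Order.TTheory GRing.Theory Num.Theory.
Import numFieldNormedType.Exports.
Local Open Scope classical_set_scope.
Local Open Scope ring_scope.

(* Indexing convention (0-based):
   paper s_i, u_i, v_i, c_i, d_i (i = 1..n)  <->  x 0 (i-1) for x : 'rV_n;
   paper w_i (i = 1..n+1)                     <->  w 0 (i-1) for w : 'rV_(n.+1).
   So paper w_1 = w 0 ord0, w_{n+1} = w 0 ord_max, and for i : 'I_n,
   paper w_{i+1} (0-based i) = w 0 (widen_ord (leqnSn n) i),
   paper w_{i+2}             = w 0 (lift ord0 i). *)

Section LP.
Variables (R : realType) (n : nat).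

Definition lp_feasible (s u : 'rV[R]_n) (w : 'rV[R]_n.+1) (v : 'rV[R]_n) : Prop :=
  [/\ forall i : 'I_n,
        w 0 (lift ord0 i) - v 0 i = u 0 i + w 0 (widen_ord (leqnSn n) i) - s 0 i,
      forall j : 'I_n.+1, 0 <= w 0 j,
      w 0 ord0 = 0
    & forall i : 'I_n, 0 <= v 0 i].

Definition lp_obj (c d : 'rV[R]_n) (C : R) (w : 'rV[R]_n.+1) (v : 'rV[R]_n) : R :=
  \sum_(i < n) (c 0 i * w 0 (widen_ord (leqnSn n) i) + d 0 i * v 0 i)
  + C * w 0 ord_max.

Definition f_lp (c d : 'rV[R]_n) (C : R) (s u : 'rV[R]_n) : R :=
  inf [set r : R | exists (w : 'rV[R]_n.+1) (v : 'rV[R]_n),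
                    lp_feasible s u w v /\ r = lp_obj c d C w v].

End LP.

From HB Require Import structures.
From mathcomp Require Import all_boot all_order all_algebra.
From mathcomp Require Import all_classical all_reals all_analysis.
From mathcomp Require Import ring.
Import Order.TTheory GRing.Theory Num.Theory.
Import numFieldNormedType.Exports.
Set Implicit Arguments. Unset Strict Implicit. Unset Printing Implicit Defensive.
Local Open Scope classical_set_scope.
Local Open Scope ring_scope.

(* Since all costs are nonnegative, f is the infimum of a set of nonnegative
   objective values.  If the entries of u are bounded by B (U is compact), the
   staircase point w_j = (j-1) B, v_i = B - u_i + s_i is feasible, with a cost
   bounded uniformly on S x U.  Constraints and objective are linear, so a
   convex combination of near-optimal feasible points for (s1,u1) and (s2,u2)
   is feasible for the combined data, at the combined cost: f is jointly convex. *)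

Lemma compact_mx_entry_bounded (R : realType) (m n : nat) (U : set 'M[R]_(m, n)) :
  compact U -> exists2 B : R, 0 <= B & forall A i j, U A -> `|A i j| <= B.
Proof.
case/compact_bounded => M [_ /(_ (`|M| + 1))].
rewrite (le_lt_trans (ler_norm M)) ?ltrDl // => /(_ isT) UM.
exists (`|M| + 1); first by rewrite addr_ge0.
move=> A i j UA; apply: le_trans (UM A UA).
change (`|A i j| <= mx_norm A); rewrite mx_normrE.
exact: (le_bigmax 0 (fun ij : 'I_m * 'I_n => `|A ij.1 ij.2|) (i, j)).
Qed.

Section LPValue.
Variables (R : realType) (n : nat) (c d : 'rV[R]_n) (C : R).

Definition lp_values (s u : 'rV[R]_n) : set R :=
  [set r | exists w v, lp_feasible s u w v /\ r = lp_obj c d C w v].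

Lemma lp_feasible_comb (s1 u1 v1 s2 u2 v2 : 'rV[R]_n) (w1 w2 : 'rV[R]_n.+1) (t : R) :
  0 <= t -> t <= 1 ->
  lp_feasible s1 u1 w1 v1 -> lp_feasible s2 u2 w2 v2 ->
  lp_feasible (t *: s1 + (1 - t) *: s2) (t *: u1 + (1 - t) *: u2)
              (t *: w1 + (1 - t) *: w2) (t *: v1 + (1 - t) *: v2).
Proof.
move=> t0 t1 [flow1 w1_ge0 w10 v1_ge0] [flow2 w2_ge0 w20 v2_ge0].
have t'0 : 0 <= 1 - t by rewrite subr_ge0.
split=> [i|j||i]; rewrite !mxE.
- set w1i := w1 0 _; set w2i := w2 0 _.
  have -> : t * w1i + (1 - t) * w2i - (t * v1 0 i + (1 - t) * v2 0 i)
          = t * (w1i - v1 0 i) + (1 - t) * (w2i - v2 0 i) by ring.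
  by rewrite flow1 flow2; ring.
- by rewrite addr_ge0 ?mulr_ge0.
- by rewrite w10 w20 !mulr0 addr0.
- by rewrite addr_ge0 ?mulr_ge0.
Qed.

Lemma lp_obj_comb (w1 w2 : 'rV[R]_n.+1) (v1 v2 : 'rV[R]_n) (t : R) :
  lp_obj c d C (t *: w1 + (1 - t) *: w2) (t *: v1 + (1 - t) *: v2)
  = t * lp_obj c d C w1 v1 + (1 - t) * lp_obj c d C w2 v2.
Proof.
rewrite /lp_obj !mxE !mulrDr !mulr_sumr addrACA -big_split /=.
by congr (_ + _); [apply: eq_bigr => i _; rewrite !mxE | ]; ring.
Qed.

Hypotheses (c_ge0 : forall i, 0 <= c 0 i) (d_ge0 : forall i, 0 <= d 0 i)
  (C_ge0 : 0 <= C).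

Lemma lp_obj_ge0 (s u : 'rV[R]_n) w v : lp_feasible s u w v -> 0 <= lp_obj c d C w v.
Proof.
case=> _ w_ge0 _ v_ge0; rewrite addr_ge0 ?mulr_ge0 //.
by apply: sumr_ge0 => i _; rewrite addr_ge0 ?mulr_ge0.
Qed.

Lemma lp_values_lbound (s u : 'rV[R]_n) : lbound (lp_values s u) 0.
Proof. by move=> _ [w [v [feas ->]]]; exact: lp_obj_ge0 feas. Qed.

Lemma f_lp_ge0 (s u : 'rV[R]_n) : lp_values s u !=set0 -> 0 <= f_lp c d C s u.
Proof. by move=> ne; exact: lb_le_inf ne (@lp_values_lbound s u). Qed.

Lemma f_lp_le_obj (s u : 'rV[R]_n) w v :
  lp_feasible s u w v -> f_lp c d C s u <= lp_obj c d C w v.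
Proof.
by move=> feas; apply: ge_inf; [exists 0; exact: lp_values_lbound | exists w, v].
Qed.

Lemma f_lp_convex (s1 u1 s2 u2 : 'rV[R]_n) (t : R) : 0 <= t -> t <= 1 ->
  lp_values s1 u1 !=set0 -> lp_values s2 u2 !=set0 ->
  f_lp c d C (t *: s1 + (1 - t) *: s2) (t *: u1 + (1 - t) *: u2)
    <= t * f_lp c d C s1 u1 + (1 - t) * f_lp c d C s2 u2.
Proof.
move=> t0 t1 ne1 ne2; have t'0 : 0 <= 1 - t by rewrite subr_ge0.
apply/ler_addgt0Pr => e e_gt0.
have has_inf_values s u : lp_values s u !=set0 -> has_inf (lp_values s u).
  by move=> ne; split=> //; exists 0; exact: lp_values_lbound.
have [_ [w1 [v1 [feas1 ->]]] near1] := inf_adherent e_gt0 (has_inf_values _ _ ne1).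
have [_ [w2 [v2 [feas2 ->]]] near2] := inf_adherent e_gt0 (has_inf_values _ _ ne2).
apply: le_trans (f_lp_le_obj (lp_feasible_comb t0 t1 feas1 feas2)) _.
rewrite lp_obj_comb.
have -> : t * f_lp c d C s1 u1 + (1 - t) * f_lp c d C s2 u2 + e
        = t * (f_lp c d C s1 u1 + e) + (1 - t) * (f_lp c d C s2 u2 + e) by ring.
by rewrite lerD // ler_wpM2l // ltW.
Qed.

Section Staircase.
Variables (B : R) (s u : 'rV[R]_n).
Hypotheses (B_ge0 : 0 <= B) (u_le : forall i, `|u 0 i| <= B) (s_ge0 : forall i, 0 <= s 0 i).

Let w : 'rV[R]_n.+1 := \row_j (j%:R * B).
Let v : 'rV[R]_n := \row_i (B - u 0 i + s 0 i).

Lemma lp_feasible_staircase : lp_feasible s u w v.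
Proof.
split=> [i|j||i]; rewrite !mxE.
- by rewrite /= /bump /= add1n -addn1 natrD; ring.
- by rewrite mulr_ge0.
- by rewrite mul0r.
- by rewrite addr_ge0 // subr_ge0 (le_trans (ler_norm _)).
Qed.

Lemma lp_values_staircase : lp_values s u !=set0.
Proof. by exists (lp_obj c d C w v), w, v; split=> //; exact: lp_feasible_staircase. Qed.

Lemma f_lp_le_staircase (T : R) : \sum_(i < n) s 0 i <= T ->
  f_lp c d C s u
    <= \sum_(i < n) (c 0 i * (n%:R * B) + d 0 i * (B + B + T)) + C * (n%:R * B).
Proof.
move=> sum_s_le; apply: le_trans (f_lp_le_obj lp_feasible_staircase) _.
have s_le i : s 0 i <= T.
  by apply: le_trans sum_s_le; rewrite (bigD1 i) //= lerDl sumr_ge0.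
have v_le i : B - u 0 i + s 0 i <= B + B + T.
  rewrite lerD // lerD2l; apply: le_trans (ler_norm _) _.
  by rewrite normrN.
rewrite /lp_obj lerD ?ler_sum // => [i _|]; rewrite !mxE.
  apply: lerD; apply: ler_wpM2l => //.
  by apply: ler_wpM2r => //; rewrite ler_nat; exact: ltnW (ltn_ord i).
by rewrite ler_wpM2l // ler_wpM2r // ler_nat.
Qed.

End Staircase.
End LPValue.

Theorem lemma4 (R : realType) (n : nat) (T C : R) (c d : 'rV[R]_n)
    (U : set 'rV[R]_n)
    (hn : (1 <= n)%N) (hT : 0 < T)
    (hc : forall i : 'I_n, 0 <= c 0 i) (hd : forall i : 'I_n, 0 <= d 0 i)
    (hC : 0 <= C)
    (hdc : forall i j : 'I_n, nat_of_ord j = (nat_of_ord i).+1 ->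
             d 0 j - d 0 i <= c 0 j)
    (hU0 : U !=set0) (hUc : compact U)
    (hUcvx : forall (x y : 'rV[R]_n) (t : R), U x -> U y -> 0 <= t -> t <= 1 ->
               U (t *: x + (1 - t) *: y)) :
  let S := [set s : 'rV[R]_n | (forall i, 0 <= s 0 i) /\ \sum_(i < n) s 0 i <= T] in
  (exists M : R, forall s u, S s -> U u -> `|f_lp c d C s u| <= M) /\
  (forall (s1 s2 u1 u2 : 'rV[R]_n) (t : R),
     S s1 -> S s2 -> U u1 -> U u2 -> 0 <= t -> t <= 1 ->
     f_lp c d C (t *: s1 + (1 - t) *: s2) (t *: u1 + (1 - t) *: u2)
       <= t * f_lp c d C s1 u1 + (1 - t) * f_lp c d C s2 u2).
Proof.
move=> S.
have [B B_ge0 U_bounded] := compact_mx_entry_bounded hUc.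
have values_ne s u : S s -> U u -> lp_values c d C s u !=set0.
  by case=> s_ge0 _ Uu; apply: lp_values_staircase B_ge0 _ s_ge0 => i; exact: U_bounded.
split=> [|s1 s2 u1 u2 t Ss1 Ss2 Uu1 Uu2 t0 t1].
  exists (\sum_(i < n) (c 0 i * (n%:R * B) + d 0 i * (B + B + T)) + C * (n%:R * B)).
  move=> s u Ss Uu; rewrite ger0_norm; last exact: f_lp_ge0 (values_ne _ _ Ss Uu).
  case: Ss => s_ge0 sum_s_le.
  by apply: f_lp_le_staircase => // i; exact: U_bounded.
by apply: f_lp_convex => //; exact: values_ne.
Qed.
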